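(* Let $\Box$ be an axis-parallel square of side length $1/2$ in $\mathbb{R}^2$, let $l$ be the line containing its top edge, and let $H$ be the open halfplane above $l$. Let $A$ be a finite set of points in $\Box$, and let $\xi(A)$ be the boundary of the closure of $H\setminus\bigcup_{a\in A}\odot_a$. Then $\xi(A)$ is an $x$-monotone curve whose leftmost and rightmost pieces are horizontal rays and each other piece is a portion of the boundary circle of $\odot_a$ for some $a\in A$ (said to be contributed by $a$), and: (1) if $\sigma,\sigma'$ are pieces of $\xi(A)$ contributed by $a$ and $a'$ respectively, then $\sigma$ lies to the left of $\sigma'$ on $\xi(A)$ iff $a$ lies to the left of $a'$; (2) for each $a\in A$ at most one piece of $\xi(A)$ is contributed by $a$, so $\xi(A)$ has $O(|A|)$ pieces.
   Context: $\odot_a$ denotes the closed disk of radius 1 centered at $a$. A piece is a maximal portion of the curve lying on a single circle (or ray). *)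

(* R : realType, points of the plane are R * R
   (product topology = Euclidean topology). *)
From HB Require Import structures.
From mathcomp Require Import all_boot all_order all_algebra.
From mathcomp Require Import all_classical all_reals all_analysis.
Set Implicit Arguments. Unset Strict Implicit. Unset Printing Implicit Defensive.
Import Order.TTheory GRing.Theory Num.Theory.
Import numFieldNormedType.Exports.
Local Open Scope classical_set_scope.
Local Open Scope ring_scope.

Definition odot {R : realType} (a : R * R) : set (R * R) :=
  [set p | (p.1 - a.1) ^+ 2 + (p.2 - a.2) ^+ 2 <= 1].

Definition on_circle {R : realType} (a p : R * R) : Prop :=
  (p.1 - a.1) ^+ 2 + (p.2 - a.2) ^+ 2 = 1.

Definition square {R : realType} (x0 y0 : R) : set (R * R) :=
  [set p | x0 <= p.1 <= x0 + 2^-1 /\ y0 <= p.2 <= y0 + 2^-1].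

Definition halfplane_above {R : realType} (y0 : R) : set (R * R) :=
  [set p | y0 + 2^-1 < p.2].

Definition boundary {T : topologicalType} (S : set T) : set T :=
  closure S `\` interior S.

Definition xi {R : realType} (y0 : R) (A : set (R * R)) : set (R * R) :=
  boundary (closure (halfplane_above y0 `\` \bigcup_(a in A) odot a)).

From HB Require Import structures.
From mathcomp Require Import all_boot all_order all_algebra.
From mathcomp Require Import all_classical all_reals all_analysis.
From mathcomp Require Import ring lra zify.
Import Order.TTheory GRing.Theory Num.Theory.
Import numFieldNormedType.Exports.
Local Open Scope classical_set_scope.
Local Open Scope ring_scope.

(* Write L := y0 + 1/2 and arc_a(x) := a.2 + sqrt (1 - (x - a.1)^2) for the
   upper unit semicircle of a.  Above l, a point lies outside every disk iff it
   lies strictly above the envelope g := max (L, max_a arc_a), so xi(A) is the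
   graph of the continuous function g.
   Since sqrt (1 - u^2) is concave, arc_b - arc_a is nonincreasing whenever
   b.1 < a.1.  Hence the centre realizing g moves rightwards as x grows:
   every centre realizes g on a single interval, and these intervals are
   ordered like the abscissae of their centres.  The
   left side x0 of the square lies under the raised part of every arc, so the
   set where g > L is an interval, and its pieces are exactly these intervals. *)

Section Epigraph.
Context {R : realType} (f : R -> R).
Hypothesis f_cont : continuous f.

Definition epigraph := [set p : R * R | f p.1 <= p.2].
Definition strict_epigraph := [set p : R * R | f p.1 < p.2].

Lemma continuous_epigraph_gap : continuous (fun p : R * R => p.2 - f p.1).
Proof.
move=> p; apply: continuousB; first exact: cvg_snd.
exact: continuous_comp cvg_fst (f_cont _).
Qed.

Lemma closed_epigraph : closed epigraph.
Proof.
have -> : epigraph = (fun p : R * R => p.2 - f p.1) @^-1` [set x | 0 <= x].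
  by apply/seteqP; split => p /=; rewrite subr_ge0.
exact: (continuous_closedP _).1 continuous_epigraph_gap _ (@closed_ge R 0).
Qed.

Lemma open_strict_epigraph : open strict_epigraph.
Proof.
have -> :
    strict_epigraph = (fun p : R * R => p.2 - f p.1) @^-1` [set x | 0 < x].
  by apply/seteqP; split => p /=; rewrite subr_gt0.
exact: (continuousP _).1 continuous_epigraph_gap _ (@open_gt R 0).
Qed.

Lemma closure_strict_epigraph : closure strict_epigraph = epigraph.
Proof.
apply/seteqP; split.
  rewrite [X in _ `<=` X](closure_id _).1; last exact: closed_epigraph.
  by apply: closureS => p /ltW.
move=> p /= fp B /nbhs_ballP [e /= e0 eB].
exists (p.1, p.2 + e / 2); split.
  by move: fp; rewrite /epigraph /strict_epigraph /=; lra.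
apply: eB; split; rewrite -ball_normE /= ?subrr ?normr0 //.
by rewrite opprD addrA subrr sub0r normrN ger0_norm; lra.
Qed.

Lemma interior_epigraph : epigraph° = strict_epigraph.
Proof.
apply/seteqP; split.
  move=> p /nbhs_ballP [e /= e0 eB].
  have : epigraph (p.1, p.2 - e / 2).
    apply: eB; split; rewrite -ball_normE /= ?subrr ?normr0 //.
    by rewrite opprB addrC subrK ger0_norm; lra.
  rewrite /epigraph /strict_epigraph /=; lra.
rewrite -(open_subsetE _ open_strict_epigraph) => p /ltW //.
Qed.

Lemma boundary_closure_strict_epigraph :
  boundary (closure strict_epigraph) = [set p | p.2 = f p.1].
Proof.
rewrite /boundary closure_strict_epigraph -(closure_id _).1 ?interior_epigraph;
  last exact: closed_epigraph.
apply/seteqP; split => p; rewrite /epigraph /strict_epigraph /=.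
  by move=> [fp /negP]; rewrite -leNgt => pf; apply/le_anti/andP.
by move=> ->; split; rewrite ?ltxx.
Qed.
End Epigraph.

Section Semicircle.
Context {R : realType}.

Definition semicircle (u : R) := Num.sqrt (1 - u ^+ 2).

Lemma semicircle_ge0 u : 0 <= semicircle u.
Proof. exact: sqrtr_ge0. Qed.

Lemma sqr_semicircle u : u ^+ 2 <= 1 -> semicircle u ^+ 2 = 1 - u ^+ 2.
Proof. by move=> u1; rewrite sqr_sqrtr // subr_ge0. Qed.

Lemma semicircle_out u : 1 <= u ^+ 2 -> semicircle u = 0.
Proof. by move=> u1; rewrite /semicircle ler0_sqrtr // subr_le0. Qed.

Lemma semicircle_gt0 u : (0 < semicircle u) = (u ^+ 2 < 1).
Proof. by rewrite sqrtr_gt0 subr_gt0. Qed.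

Lemma semicircle_ltP u t : 0 < t -> (semicircle u < t) = (1 < u ^+ 2 + t ^+ 2).
Proof.
move=> t0; rewrite -[t in LHS]gtr0_norm // -sqrtr_sqr ltr_sqrt ?exprn_gt0 //.
by rewrite ltrBlDr addrC.
Qed.

Lemma semicircle_le u v : v ^+ 2 <= u ^+ 2 -> semicircle u <= semicircle v.
Proof. by move=> vu; rewrite ler_wsqrtr // lerD2l lerN2. Qed.

Lemma semicircle_ge_min u v w : u <= v <= w ->
  Num.min (semicircle u) (semicircle w) <= semicircle v.
Proof.
move=> /andP [uv vw]; rewrite ge_min.
have [v0 | v0] := lerP v 0; first by rewrite (@semicircle_le u) //; nra.
by rewrite (@semicircle_le w) ?orbT //; nra.
Qed.

Lemma semicircle_gt_half u : 4 * u ^+ 2 <= 1 -> 1 < 2 * semicircle u.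
Proof.
move=> u4; have := sqr_semicircle u; have := semicircle_ge0 u.
move=> S0 /(_ ltac:(nra)) S2; rewrite ltNge; apply/negP => S1.
have : 0 <= (1 - 2 * semicircle u) * (1 + 2 * semicircle u) by apply: mulr_ge0; lra.
nra.
Qed.

Lemma semicircle_chord p q r : -1 <= p -> p < q -> q < r -> r <= 1 ->
  semicircle p * (r - q) + semicircle r * (q - p) <= semicircle q * (r - p).
Proof.
move=> p1 pq qr r1.
have := sqr_semicircle p; have := sqr_semicircle q; have := sqr_semicircle r.
move=> /(_ ltac:(nra)) Sr /(_ ltac:(nra)) Sq /(_ ltac:(nra)) Sp.
have := semicircle_ge0 p; have := semicircle_ge0 q; have := semicircle_ge0 r.
set P := semicircle p; set Q := semicircle q; set S := semicircle r.
move=> S0 Q0 P0; set Y := P * (r - q) + S * (q - p).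
have defect : (Q * (r - p)) ^+ 2 - Y ^+ 2 =
    (r - q) * (q - p) * ((r - p) ^+ 2 + (P - S) ^+ 2).
  rewrite exprMn Sq /Y; apply/eqP; rewrite -subr_eq0; apply/eqP.
  transitivity ((r - q) * (r - p) * (1 - p ^+ 2 - P ^+ 2)
    + (q - p) * (r - p) * (1 - r ^+ 2 - S ^+ 2)); first by ring.
  by rewrite Sp Sr; ring.
have : Y ^+ 2 <= (Q * (r - p)) ^+ 2.
  rewrite -subr_ge0 defect; apply: mulr_ge0; first by nra.
  by apply: addr_ge0; apply: sqr_ge0.
have : 0 <= Q * (r - p) by nra.
have : 0 <= Y by rewrite /Y; nra.
nra.
Qed.

Lemma semicircle_increments u v d : 0 < d -> u <= v -> -1 <= u -> v + d <= 1 ->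
  semicircle (v + d) - semicircle v <= semicircle (u + d) - semicircle u.
Proof.
move=> d0; rewrite le_eqVlt => /predU1P [-> | uv] u1 v1; first by [].
have c1 := @semicircle_chord u (u + d) (v + d) u1 ltac:(lra) ltac:(lra) v1.
have c2 := @semicircle_chord u v (v + d) u1 uv ltac:(lra) v1.
rewrite -(ler_pM2r (_ : 0 < v + d - u)); last by lra.
nra.
Qed.

Lemma continuous_semicircle : continuous semicircle.
Proof.
move=> u; apply: (@continuous_comp _ _ _ (fun u : R => 1 - u ^+ 2) (@Num.sqrt R)).
  by apply: continuousB; [exact: cst_continuous | exact: exprn_continuous].
exact: sqrt_continuous.
Qed.

End Semicircle.

Lemma lex_argmax_seq {R : realDomainType} {T : eqType} (r : seq T)
    (f g : T -> R) :
  r != [::] -> exists2 a, a \in r &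
    {in r, forall b, f b <= f a /\ (f b = f a -> g b <= g a)}.
Proof.
elim: r => [//|b r IH] _.
have [-> | /IH [a ar amax]] := eqVneq r [::].
  by exists b => [|c]; rewrite ?mem_head // inE => /eqP ->.
have in_a : a \in b :: r by rewrite inE ar orbT.
have [fba | fab | fab] := ltgtP (f b) (f a).
- exists a => // c; rewrite inE => /predU1P [-> | /amax //].
  by split=> [|fe]; [exact: ltW | move: fba; rewrite fe ltxx].
- exists b => [|c]; first exact: mem_head.
  rewrite inE => /predU1P [-> // | /amax [fca _]].
  split=> [|fe]; first exact: le_trans fca (ltW fab).
  by move: fab; rewrite -fe ltNge fca.
have [gba | gab] := lerP (g b) (g a).
  by exists a => // c; rewrite inE => /predU1P [-> | /amax //]; rewrite fab.
exists b => [|c]; first exact: mem_head.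
rewrite inE => /predU1P [-> // | /amax [fca gca]].
by rewrite fab; split=> // /gca /le_trans; apply; exact: ltW.
Qed.

Lemma near_all_in_seq {T : eqType} {U : Type} {F : set_system U}
    {FF : Filter F} (r : seq T) (P : T -> U -> Prop) :
  {in r, forall b, \forall y \near F, P b y} ->
  \forall y \near F, {in r, forall b, P b y}.
Proof.
elim: r => [|b r IH] rP; first by apply: nearW => y b.
have Pr : {in r, forall c, \forall y \near F, P c y}.
  by move=> c cr; apply: rP; rewrite inE cr orbT.
apply: filterS (filterI (rP b (mem_head b r)) (IH Pr)) => y [Pb Pry] c.
by rewrite inE => /predU1P [-> | /Pry].
Qed.

Lemma itvcc_eq_of_itvoo {R : realType} {f : R -> R} {y p q : R} :
  continuous f -> p < q -> (forall x, p < x < q -> f x = y) ->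
  forall x, p <= x <= q -> f x = y.
Proof.
move=> fc pq fy.
have sub : closure [set x | p < x < q] `<=` f @^-1` [set y].
  rewrite [X in _ `<=` X](closure_id _).1; last first.
    exact: (continuous_closedP _).1 fc _ (@closed_eq R y).
  by apply: closureS => x /fy.
move=> x /andP [px xq]; apply: sub => B /nbhs_ballP [e /= e0 eB].
pose d := Num.min e ((q - p) / 2).
have d0 : 0 < d by rewrite lt_min e0 /=; lra.
have de : d <= e by rewrite ge_min lexx.
have dpq : d <= (q - p) / 2 by rewrite ge_min lexx orbT.
have [xm | xm] := lerP x ((p + q) / 2).
  exists (x + d / 2); split; first by apply/andP; split; lra.
  by apply: eB; rewrite -ball_normE /= opprD addrA subrr sub0r normrN gtr0_norm;
    lra.
exists (x - d / 2); split; first by apply/andP; split; lra.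
by apply: eB; rewrite -ball_normE /= opprB addrC subrK gtr0_norm; lra.
Qed.

Section Envelope.
Context {R : realType}.
Variables (L : R) (s : seq (R * R)).

(* Away from [a.1 - 1 <= x <= a.1 + 1], [Num.sqrt] of a negative number is 0,
   so [arc a] is flat at height [a.2]; centres lie below [L], so this part of
   an arc never shows on the envelope. *)
Definition arc (a : R * R) (x : R) := a.2 + semicircle (x - a.1).

Definition envelope (x : R) := \big[Num.max/L]_(a <- s) arc a x.

Lemma continuous_arc a : continuous (arc a).
Proof.
move=> x; apply: cvgD; first exact: cvg_cst.
apply: (@continuous_comp _ _ _ (fun y : R => y - a.1) semicircle).
  by apply: continuousB; [exact: cvg_id | exact: cst_continuous].
exact: continuous_semicircle.
Qed.

Lemma continuous_envelope : continuous envelope.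
Proof.
rewrite /envelope; elim: s => [|a r IH].
  by under eq_fun do rewrite big_nil; exact: cst_continuous.
under eq_fun do rewrite big_cons.
exact: max_fun_continuous (continuous_arc a) IH.
Qed.

Lemma envelope_ge x : L <= envelope x.
Proof. exact: bigmax_ge_id. Qed.

Lemma arc_le_envelope {a} x : a \in s -> arc a x <= envelope x.
Proof. by move=> sa; rewrite /envelope (le_bigmax_seq _ _ _ _ sa). Qed.

Lemma envelope_ltP x t :
  envelope x < t <-> L < t /\ {in s, forall a, arc a x < t}.
Proof.
split=> [xt | [Lt st]].
  split=> [|a sa]; apply: le_lt_trans xt.
    exact: envelope_ge.
  exact: arc_le_envelope.
rewrite /envelope big_seq; elim/big_ind: _ => // u v ut vt.
by rewrite gt_max ut vt.
Qed.

Lemma raisedP x : L < envelope x <-> exists2 a, a \in s & L < arc a x.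
Proof.
split=> [Lx | [a sa La]]; last exact: lt_le_trans La (arc_le_envelope _ sa).
have /hasP [a sa La] : has (fun a => L < arc a x) s; last by exists a.
apply: contraTT Lx => /hasPn sL; rewrite -leNgt /envelope big_seq.
by apply: bigmax_le => // a /sL; rewrite -leNgt.
Qed.

Lemma eq_arc_centre {a b x} : a.1 = b.1 -> arc a x = arc b x -> a = b.
Proof. by case: a b => [a1 a2] [b1 b2] /= <-; rewrite /arc /= => /addIr ->. Qed.

Lemma arc_ge_min a x y z : x <= y <= z ->
  Num.min (arc a x) (arc a z) <= arc a y.
Proof.
move=> xyz; have := @semicircle_ge_min _ (x - a.1) (y - a.1) (z - a.1).
by rewrite !lerD2r => /(_ xyz); rewrite !ge_min /arc !lerD2l.
Qed.

Lemma arcB_antimono {a b x y} :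
  b.1 < a.1 -> x <= y -> -1 <= x - a.1 -> y - b.1 <= 1 ->
  arc b y - arc a y <= arc b x - arc a x.
Proof.
move=> ba xy xa yb.
have shift z : z - a.1 + (a.1 - b.1) = z - b.1 by ring.
have := @semicircle_increments _ (x - a.1) (y - a.1) (a.1 - b.1).
rewrite !shift /arc => /(_ _ _ xa yb); lra.
Qed.

Section CentresBelow.
Hypothesis centres_below : {in s, forall a, a.2 <= L}.

Lemma arc_lt_notin_odot {a p} :
  a \in s -> L < p.2 -> arc a p.1 < p.2 <-> ~ odot a p.
Proof.
move=> sa Lp; have a2 := centres_below _ sa.
rewrite /arc -ltrBrDl semicircle_ltP; last by lra.
by rewrite /odot /= ltNge; split => /negP.
Qed.

Lemma halfplane_minus_disks :
  [set p | L < p.2] `\` \bigcup_(a in [set` s]) odot a = strict_epigraph envelope.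
Proof.
apply/seteqP; split => p /=.
  move=> [Lp notin]; apply/envelope_ltP; split => // a sa.
  by apply/(arc_lt_notin_odot sa Lp) => pa; apply: notin; exists a.
move=> /envelope_ltP [Lp st]; split => // [[a sa pa]].
by move: (st a sa) => /(arc_lt_notin_odot sa Lp); apply.
Qed.

Lemma raised_arc_dom {a x} : a \in s -> L < arc a x -> (x - a.1) ^+ 2 < 1.
Proof.
move=> sa La; rewrite -semicircle_gt0.
by move: La (centres_below _ sa); rewrite /arc; lra.
Qed.

(* Ties go to the rightmost centre, the one that keeps realizing the envelope
   just to the right of [x] (winner_right). *)
Definition winner x a := [/\ a \in s, L < arc a x,
  {in s, forall b, arc b x <= arc a x} &
  {in s, forall b, arc b x = arc a x -> b.1 <= a.1}].

Definition won a := [set x | winner x a].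

Lemma winner_envelope {x a} : winner x a -> envelope x = arc a x.
Proof.
case=> sa La amax _; apply/le_anti; rewrite arc_le_envelope // andbT.
by rewrite /envelope big_seq; apply: bigmax_le => //; exact: ltW.
Qed.

Lemma winner_raised {x a} : winner x a -> L < envelope x.
Proof. by move=> wa; rewrite (winner_envelope wa); case: wa. Qed.

Lemma winner_uniq {x a b} : winner x a -> winner x b -> a = b.
Proof.
case=> sa _ amax atie [sb _ bmax btie].
have ab : arc a x = arc b x by apply/le_anti; rewrite bmax // amax.
by apply: (eq_arc_centre _ ab); apply/le_anti; rewrite btie // atie.
Qed.

Lemma exists_winner {x} : L < envelope x -> exists a, winner x a.
Proof.
move=> /raisedP [b sb Lb]; have s0 : s != [::] by move: sb; case: (s).
have [a sa amax] := lex_argmax_seq s (fun a => arc a x) (fun a => a.1) s0.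
exists a; split => // [|c sc | c sc]; last exact: (amax c sc).2.
  exact: lt_le_trans Lb (amax b sb).1.
exact: (amax c sc).1.
Qed.

Lemma winner_on_circle {x a} : winner x a -> on_circle a (x, envelope x).
Proof.
move=> wa; rewrite /on_circle /= (winner_envelope wa).
case: wa => sa La _ _; have xa := raised_arc_dom sa La.
have -> : arc a x - a.2 = semicircle (x - a.1) by rewrite /arc; ring.
by rewrite sqr_semicircle ?(ltW xa) //; ring.
Qed.

Lemma winner_mono {x x' a a'} :
  x < x' -> winner x a -> winner x' a' -> a.1 <= a'.1.
Proof.
move=> xx' [sa La amax _] [sa' La' a'max a'tie].
rewrite leNgt; apply/negP => a'a.
have xa := raised_arc_dom sa La; have xa' := raised_arc_dom sa' La'.
have := arcB_antimono a'a (ltW xx') (_ : -1 <= x - a.1) (_ : x' - a'.1 <= 1).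
move=> /(_ ltac:(nra) ltac:(nra)) mono.
have e : arc a x' = arc a' x'.
  by apply/le_anti; rewrite a'max //=; have := amax a' sa'; lra.
by have := a'tie a sa e; rewrite leNgt a'a.
Qed.

Lemma winner_right {x a} : winner x a ->
  exists2 e, 0 < e & forall y, x <= y < x + e -> winner y a.
Proof.
move=> wa; case: (wa) => sa La amax atie; have xa := raised_arc_dom sa La.
have near_raised : \forall y \near x, L < arc a y.
  exact: cvgr_gt _ (continuous_arc a x) _ La.
have near_right : \forall y \near x,
    {in s, forall b, a.1 <= b.1 -> b != a -> arc b y < arc a y}.
  apply near_all_in_seq => b sb.
  have [ab | ba] := lerP a.1 b.1; last by apply: nearW => y [].
  have [-> | ba] := eqVneq b a; first by apply: nearW => y _ [].
  have bxa : 0 < arc a x - arc b x.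
    rewrite subr_gt0 lt_neqAle amax // andbT; apply: contra_neq ba => e.
    by apply: (eq_arc_centre _ e); apply/le_anti; rewrite atie ?ab.
  apply: filterS
    (cvgr_gt _ (cvgB (continuous_arc a x) (continuous_arc b x)) _ bxa).
  by move=> y /=; rewrite subr_gt0.
have [e /= e0 eP] := (nbhs_ballP _ _).1 (filterI near_raised near_right).
exists e => // y /andP [xy ye].
have [Lay ay] : L < arc a y /\
    {in s, forall b, a.1 <= b.1 -> b != a -> arc b y < arc a y}.
  by apply: eP; rewrite -ball_normE /= distrC ger0_norm; lra.
split => // [b sb | b sb bay].
  have [ab | ba] := lerP a.1 b.1.
    by have [-> // | ba] := eqVneq b a; apply/ltW/ay.
  have [yb | yb] := lerP (y - b.1) 1.
    have := arcB_antimono ba xy (_ : -1 <= x - a.1) yb; have := amax b sb.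
    by move=> + /(_ ltac:(nra)); lra.
  rewrite {1}/arc semicircle_out; last by nra.
  by have := centres_below _ sb; lra.
rewrite leNgt; apply/negP => ab.
have ba : b != a by apply: contraTneq ab => ->; rewrite ltxx.
by have := ay b sb (ltW ab) ba; rewrite bay ltxx.
Qed.

Lemma won_same_abscissa {a b} :
  won a !=set0 -> won b !=set0 -> a.1 = b.1 -> a = b.
Proof.
move=> [x [sa _ amax _]] [y [sb _ bmax _]] ab.
have := amax b sb; have := bmax a sa; rewrite /arc -ab => ba ab2.
by apply: (eq_arc_centre ab (x := x)); rewrite /arc -ab; lra.
Qed.

Definition contributors :=
  sort (fun a b : R * R => a.1 <= b.1) (undup [seq a <- s | `[< won a !=set0 >]]).

Definition contributor i := nth (0, 0) contributors i.

Local Notation k := (size contributors).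

Lemma contributor_won {i} : (i < k)%N -> won (contributor i) !=set0.
Proof.
move=> ik; have := mem_nth (0, 0) ik.
by rewrite mem_sort mem_undup mem_filter => /andP [/asboolP].
Qed.

Lemma contributor_in i : (i < k)%N -> contributor i \in s.
Proof. by move=> /contributor_won [x []]. Qed.

Lemma winner_contributor {x a} :
  winner x a -> exists2 i, (i < k)%N & contributor i = a.
Proof.
move=> wa; have ca : a \in contributors.
  have [sa _ _ _] := wa.
  by rewrite mem_sort mem_undup mem_filter sa andbT; apply/asboolP; exists x.
by exists (index a contributors); [rewrite index_mem | exact: nth_index].
Qed.

Lemma contributor_lt {i j} :
  (i < j < k)%N -> (contributor i).1 < (contributor j).1.
Proof.
move=> /andP [ij jk]; have ik := ltn_trans ij jk.
have sorted_c : sorted (fun a b : R * R => a.1 <= b.1) contributors.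
  by apply: sort_sorted => a b; exact: le_total.
have tr : transitive (fun a b : R * R => a.1 <= b.1).
  by move=> b a c; exact: le_trans.
have uniq_c : uniq contributors by rewrite sort_uniq undup_uniq.
rewrite lt_neqAle (sorted_ltn_nth tr (0, 0) sorted_c) // andbT.
apply: contraTneq ij.
move=> /(won_same_abscissa (contributor_won ik) (contributor_won jk))/eqP.
by rewrite nth_uniq // => /eqP ->; rewrite ltnn.
Qed.

Lemma contributor_lt_iff {i j} : (i < k)%N -> (j < k)%N ->
  (i < j)%N <-> (contributor i).1 < (contributor j).1.
Proof.
move=> ik jk; split=> [ij | cij]; first by apply: contributor_lt; rewrite ij.
have [// | ji | eij] := ltngtP i j; last by rewrite eij ltxx in cij.
move: (@contributor_lt j i); rewrite ji ik => /(_ isT).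
by rewrite ltNge (ltW cij).
Qed.

Lemma contributor_inj i j : (i < k)%N -> (j < k)%N ->
  contributor i = contributor j -> i = j.
Proof.
move=> ik jk cij; have [ij | ji | //] := ltngtP i j.
  by have := (contributor_lt_iff ik jk).1 ij; rewrite cij ltxx.
by have := (contributor_lt_iff jk ik).1 ji; rewrite cij ltxx.
Qed.

Lemma won_lt {i j x y} : (i < j < k)%N ->
  winner x (contributor i) -> winner y (contributor j) -> x < y.
Proof.
move=> ijk wx wy; have cij := contributor_lt ijk.
rewrite ltNge le_eqVlt; apply/negP => /predU1P [yx | yx].
  by move: wy; rewrite yx => /(winner_uniq wx) cij'; rewrite cij' ltxx in cij.
by have := winner_mono yx wy wx; rewrite leNgt cij.
Qed.

Lemma won_lbound a : has_lbound (won a).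
Proof.
by exists (a.1 - 1) => x [sa La _ _]; have := raised_arc_dom sa La; nra.
Qed.

Lemma won_ubound a : has_ubound (won a).
Proof.
by exists (a.1 + 1) => x [sa La _ _]; have := raised_arc_dom sa La; nra.
Qed.

(* Piece [i] starts at [breakpoint i]; the last piece ends at [breakpoint k]. *)
Definition breakpoint i :=
  if (i < k)%N then inf (won (contributor i)) else sup (won (contributor k.-1)).

Lemma breakpoint_le_won {i j y} : (i <= j < k)%N ->
  winner y (contributor j) -> breakpoint i <= y.
Proof.
move=> /andP [ij jk] wy; rewrite /breakpoint (leq_ltn_trans ij jk).
move: ij; rewrite leq_eqVlt => /predU1P [-> | ij].
  exact: ge_inf (won_lbound _) _ wy.
have [z wz] := contributor_won (ltn_trans ij jk).
apply: le_trans (ge_inf (won_lbound _) wz) (ltW _).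
by apply: won_lt wz wy; rewrite ij.
Qed.

Lemma won_le_breakpoint {i j y} : (i < j <= k)%N ->
  winner y (contributor i) -> y <= breakpoint j.
Proof.
move=> /andP [ij jk] wy; rewrite /breakpoint.
case: ifPn => [jk' | ]; last rewrite -leqNgt => kj.
  apply: lb_le_inf; first exact: contributor_won jk'.
  by move=> z wz; apply/ltW/(won_lt _ wy wz); rewrite ij.
have k1 : (k.-1 < k)%N by lia.
have sup_won : has_sup (won (contributor k.-1)).
  by split; [exact: contributor_won | exact: won_ubound].
have : (i <= k.-1)%N by lia.
rewrite leq_eqVlt => /predU1P [ei | ik].
  by rewrite ei in wy; have := sup_upper_bound sup_won wy.
have [z wz] := contributor_won k1.
apply: le_trans (ltW _) (sup_upper_bound sup_won wz).
by apply: won_lt wy wz; rewrite ik.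
Qed.

Lemma breakpoint_lt i : (i < k)%N -> breakpoint i < breakpoint i.+1.
Proof.
move=> ik; have [z wz] := contributor_won ik.
have [e e0 we] := winner_right wz.
have iz : breakpoint i <= z by apply: breakpoint_le_won wz; rewrite leqnn ik.
have : z + e / 2 <= breakpoint i.+1.
  by apply: won_le_breakpoint (we _ _); rewrite ?ltnSn //; lra.
lra.
Qed.

Lemma raised_around {x} : L < envelope x ->
  exists2 e, 0 < e & L < envelope (x - e) /\ L < envelope (x + e).
Proof.
move=> Lx; have [e /= e0 eP] :=
  (nbhs_ballP _ _).1 (cvgr_gt _ (continuous_envelope x) _ Lx).
exists (e / 2); first lra.
split; apply: eP; rewrite -ball_normE /=.
  by rewrite opprB addrC subrK gtr0_norm; lra.
by rewrite opprD addrA subrr sub0r normrN gtr0_norm; lra.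
Qed.

Lemma envelope_left x : x <= breakpoint 0 -> envelope x = L.
Proof.
move=> xb; apply/le_anti; rewrite envelope_ge andbT leNgt; apply/negP => Lx.
have [e e0 [Lxe _]] := raised_around Lx.
have [a wa] := exists_winner Lxe; have [j jk ja] := winner_contributor wa.
rewrite -ja in wa.
have : breakpoint 0 <= x - e by apply: breakpoint_le_won wa; rewrite jk.
lra.
Qed.

Lemma envelope_right x : breakpoint k <= x -> envelope x = L.
Proof.
move=> kx; apply/le_anti; rewrite envelope_ge andbT leNgt; apply/negP => Lx.
have [e e0 [_ Lxe]] := raised_around Lx.
have [a wa] := exists_winner Lxe; have [j jk ja] := winner_contributor wa.
rewrite -ja in wa.
have : x + e <= breakpoint k by apply: won_le_breakpoint wa; rewrite jk leqnn.
lra.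
Qed.

Section CommonPoint.
Hypothesis common_point : exists x0, {in s, forall a, L < arc a x0}.

Lemma contributors_gt0 : s != [::] -> (0 < k)%N.
Proof.
move=> s0; have [a sa] : exists a, a \in s.
  by move: s0; case: (s) => // a r _; exists a; exact: mem_head.
have [x0 raised_x0] := common_point.
have [|b wb] := @exists_winner x0.
  by apply/raisedP; exists a; rewrite ?raised_x0.
by have [i ik _] := winner_contributor wb; exact: leq_ltn_trans (leq0n i) ik.
Qed.

Lemma raised_between x y z : x <= y <= z ->
  L < envelope x -> L < envelope z -> L < envelope y.
Proof.
move=> /andP [xy yz] /raisedP [a sa La] /raisedP [b sb Lb]; apply/raisedP.
have [x0 raised_at_x0] := common_point.
have [yx0 | x0y] := lerP y x0.
  exists a => //; have := arc_ge_min a x y x0; rewrite xy yx0 => /(_ isT).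
  by apply: lt_le_trans; rewrite lt_min La raised_at_x0.
exists b => //; have := arc_ge_min b x0 y z; rewrite (ltW x0y) yz => /(_ isT).
by apply: lt_le_trans; rewrite lt_min Lb raised_at_x0.
Qed.

Lemma winner_piece {i x} : (i < k)%N -> breakpoint i < x < breakpoint i.+1 ->
  winner x (contributor i).
Proof.
move=> ik /andP [ix xi].
have [z wz zx] : exists2 z, winner z (contributor i) & z < x.
  by apply: inf_lt; [exact: contributor_won | move: ix; rewrite /breakpoint ik].
have [y Ly xy] : exists2 y, L < envelope y & x < y.
  have [i1k | ki1] := ltnP i.+1 k.
    have [y wy] := contributor_won i1k; exists y; first exact: winner_raised wy.
    by apply: lt_le_trans xi _; apply: breakpoint_le_won wy; rewrite leqnn i1k.
  have ek : k = i.+1 by lia.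
  move: xi; rewrite /breakpoint ek ltnn /=.
  move=> /(sup_gt (contributor_won ik)) [y wy xy].
  by exists y; first exact: winner_raised wy.
have Lx : L < envelope x.
  apply: (raised_between z x y) Ly; last exact: winner_raised wz.
  by rewrite (ltW zx) (ltW xy).
have [a wa] := exists_winner Lx.
have [j jk ja] := winner_contributor wa; rewrite -ja in wa.
have [ji | ij | <- //] := ltngtP j i.
  have : x < z by apply: won_lt wa wz; rewrite ji ik.
  lra.
have : breakpoint i.+1 <= x by apply: breakpoint_le_won wa; rewrite ij jk.
lra.
Qed.

Lemma on_circle_piece i x :
  (i < k)%N -> breakpoint i <= x <= breakpoint i.+1 ->
  on_circle (contributor i) (x, envelope x).
Proof.
move=> ik xi; set a := contributor i.
have sqr_cont (g : R -> R) : continuous g -> continuous (fun y => g y ^+ 2).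
  move=> gc y; apply: (@continuous_comp _ _ _ g (fun t : R => t ^+ 2)).
    exact: gc.
  exact: exprn_continuous.
have c1 : continuous (fun y : R => y - a.1).
  by move=> y; apply: cvgB; [exact: cvg_id | exact: cvg_cst].
have c2 : continuous (fun y => envelope y - a.2).
  by move=> y; apply: cvgB; [exact: continuous_envelope | exact: cvg_cst].
have circle_cont :
    continuous (fun y : R => (y - a.1) ^+ 2 + (envelope y - a.2) ^+ 2).
  by move=> y; apply: cvgD; [exact: sqr_cont c1 y | exact: sqr_cont c2 y].
have on_open y : breakpoint i < y < breakpoint i.+1 ->
    (y - a.1) ^+ 2 + (envelope y - a.2) ^+ 2 = 1.
  by move=> /(winner_piece ik) /winner_on_circle.
exact: (itvcc_eq_of_itvoo circle_cont (breakpoint_lt i ik) on_open x xi).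
Qed.

End CommonPoint.
End CentresBelow.
End Envelope.

Lemma square_arc_raised {R : realType} (x0 y0 : R) a : square x0 y0 a ->
  a.2 <= y0 + 2^-1 /\ y0 + 2^-1 < arc a x0.
Proof.
move=> [/andP [xa ax] /andP [ya ay]]; split => //.
have := @semicircle_gt_half _ (x0 - a.1); rewrite /arc.
by move=> /(_ ltac:(nra)); lra.
Qed.

Lemma xi_envelope {R : realType} (y0 : R) (s : seq (R * R)) :
  {in s, forall a, a.2 <= y0 + 2^-1} ->
  xi y0 [set` s] = [set p | p.2 = envelope (y0 + 2^-1) s p.1].
Proof.
move=> below; rewrite /xi /halfplane_above halfplane_minus_disks //.
exact/boundary_closure_strict_epigraph/continuous_envelope.
Qed.

Theorem fact3 (R : realType) (x0 y0 : R) (A : set (R * R)) :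
  finite_set A -> A !=set0 -> A `<=` square x0 y0 ->
  exists (k : nat) (xs : nat -> R) (c : nat -> R * R) (f : R -> R),
    [/\ continuous f /\ xi y0 A = [set p | p.2 = f p.1],
        (0 < k)%N /\ (forall i, (i < k)%N -> xs i < xs i.+1),
        (forall x, x <= xs 0%N -> f x = y0 + 2^-1) /\
        (forall x, xs k <= x -> f x = y0 + 2^-1),
        (forall i, (i < k)%N -> A (c i) /\
           (forall x, xs i <= x <= xs i.+1 -> on_circle (c i) (x, f x)))
      & [/\ (forall i, (i.+1 < k)%N -> c i <> c i.+1),
            (forall i j, (i < k)%N -> (j < k)%N ->
               ((i < j)%N <-> (c i).1 < (c j).1))
          & (forall i j, (i < k)%N -> (j < k)%N -> c i = c j -> i = j)]].
Proof.
move=> /finite_seqP [s ->] [a sa] s_sq.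
have s0 : s != [::] by move: sa; case: (s).
have below : {in s, forall a, a.2 <= y0 + 2^-1}.
  by move=> b /s_sq /square_arc_raised [].
have common : exists x, {in s, forall a, y0 + 2^-1 < arc a x}.
  by exists x0 => b /s_sq /square_arc_raised [].
pose L := y0 + 2^-1.
exists (size (contributors L s)), (breakpoint L s), (contributor L s).
exists (envelope L s).
split.
- by split; [exact: continuous_envelope | exact: xi_envelope].
- by split; [exact: contributors_gt0 | exact: breakpoint_lt].
- by split; [exact: envelope_left | exact: envelope_right].
- by move=> i ik; split=> [|x]; [exact: contributor_in | exact: on_circle_piece].
split.
- by move=> i ik /(@contributor_inj _ _ _ i i.+1 (ltnW ik) ik) /n_Sn.
- by move=> i j; exact: contributor_lt_iff.
- by move=> i j; exact: contributor_inj.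
Qed.
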